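(* Let $n\ge5$ be odd and let $\mathcal{S}_n$ be the regular $n$-gon state space. Then the maximum of $\bar P(\mathsf{M}^{(1)},\mathsf{M}^{(2)})$ over all pairs of compatible dichotomic measurements $\mathsf{M}^{(1)},\mathsf{M}^{(2)}$ on $\mathcal{S}_n$ equals $$\frac12\Big(1+\frac{1+\sec(\pi/n)}{4}\Big),$$ which is strictly larger than $\frac34$. In particular, there exist compatible dichotomic measurements on $\mathcal{S}_n$ with $\bar P(\mathsf{M}^{(1)},\mathsf{M}^{(2)})>\frac34$.
   Context: The regular $n$-gon state space $\mathcal{S}_n\subset\mathbb{R}^3$ is the convex hull of $s_j=(r_n\cos(2j\pi/n),\,r_n\sin(2j\pi/n),\,1)^T$, $j=1,\ldots,n$, with $r_n=\sqrt{\sec(\pi/n)}$. Effects are linear functionals $e$ on $\mathbb{R}^3$ with $0\le e\le1$ on $\mathcal{S}_n$; unit effect $u=(0,0,1)$; $\|f\|=\max_{s\in\mathcal{S}_n}|f(s)|$. A dichotomic measurement is a pair of effects $\mathsf{M}_+,\mathsf{M}_-$ with $\mathsf{M}_++\mathsf{M}_-=u$. Two dichotomic measurements are compatible if there exist effects $\mathsf{J}_{x,y}$, $x,y\in\{+,-\}$, with $\sum_y\mathsf{J}_{x,y}=\mathsf{M}^{(1)}_x$ and $\sum_x\mathsf{J}_{x,y}=\mathsf{M}^{(2)}_y$. $\bar P(\mathsf{M}^{(1)},\mathsf{M}^{(2)})=\frac18\sum_{x,y\in\{+,-\}}\|\mathsf{M}^{(1)}_x+\mathsf{M}^{(2)}_y\|$.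 *)

From HB Require Import structures.
From mathcomp Require Import all_boot all_order all_algebra.
From mathcomp Require Import all_classical all_reals.
From mathcomp Require Import reals trigo.
Set Implicit Arguments. Unset Strict Implicit. Unset Printing Implicit Defensive.
Import Order.TTheory GRing.Theory Num.Theory.
Local Open Scope ring_scope.
Local Open Scope classical_set_scope.

Section GPT.
Variable R : realType.

(* points of R^3 and linear functionals on R^3 (represented by coefficients) *)
Definition vec3 := 'rV[R]_3.
Definition ev (f x : vec3) : R := \sum_(i < 3) f 0 i * x 0 i.

Definition mk3 (a b c : R) : vec3 :=
  \row_(i < 3) (if i == 0 :> nat then a else if i == 1 :> nat then b else c).

Definition rn (n : nat) : R := Num.sqrt (1 / cos (pi / n%:R)).

(* vertices s_j, j = 1..n (j : 'I_n is used as j.+1) *)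
Definition vertex (n : nat) (j : 'I_n) : vec3 :=
  mk3 (rn n * cos (2 * (j.+1)%:R * pi / n%:R))
      (rn n * sin (2 * (j.+1)%:R * pi / n%:R)) 1.

Definition state_space (n : nat) : set vec3 :=
  [set x | exists w : 'I_n -> R, (forall j, 0 <= w j) /\ \sum_j w j = 1 /\
           x = \sum_j w j *: vertex j].

Definition unit_eff : vec3 := mk3 0 0 1.

Definition effect (n : nat) (e : vec3) : Prop :=
  forall s, state_space n s -> 0 <= ev e s <= 1.

Definition fnorm (n : nat) (f : vec3) : R :=
  sup [set `|ev f s| | s in state_space n].

(* dichotomic measurement: outcome true = "+", false = "-" *)
Definition dichotomic (n : nat) (M : bool -> vec3) : Prop :=
  (forall x, effect n (M x)) /\ M true + M false = unit_eff.

Definition compatible (n : nat) (M1 M2 : bool -> vec3) : Prop :=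
  exists J : bool -> bool -> vec3,
    (forall x y, effect n (J x y)) /\
    (forall x, \sum_(y : bool) J x y = M1 x) /\
    (forall y, \sum_(x : bool) J x y = M2 y).

Definition Pbar (n : nat) (M1 M2 : bool -> vec3) : R :=
  8^-1 * \sum_(x : bool) \sum_(y : bool) fnorm n (M1 x + M2 y).

End GPT.

From HB Require Import structures.
From mathcomp Require Import all_boot all_order all_algebra.
From mathcomp Require Import all_classical all_reals.
From mathcomp Require Import reals trigo.
From mathcomp Require Import ring lra zify.
Import Order.TTheory GRing.Theory Num.Theory.
Local Open Scope ring_scope.

(* For a joint effect J of two compatible dichotomic measurements,
   M1 x + M2 y = u + J x y - J (~~ x) (~~ y), so on the polygon
   |M1 x + M2 y| <= 1 + J x y.  When n is odd, every vertex s has two opposite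
   vertices s', s'' with s + (s' + s'') / (2 cos (pi/n)) = (0, 0, 1 + sec (pi/n)),
   the apex; hence every effect is bounded on the polygon by its value at the
   apex, and summing over the four outcome pairs gives
   8 Pbar <= 4 + u(apex) = 5 + sec (pi/n).  The bound is attained by the joint
   measurement made of the two effects k (cos (t - phi) + cos (pi/n)),
   phi = 0 and phi = 2 pi/n, and of their complement, whose marginal sums reach
   the bound at the vertices of angle 0, 2 pi/n and pi + pi/n. *)

Section LinearFunctionals.
Context {R : realType}.
Implicit Types (f g x y : vec3 R) (a : R).

Lemma ev_mk3 (a b c p q r : R) : ev (mk3 a b c) (mk3 p q r) = a * p + b * q + c * r.
Proof. by rewrite /ev !big_ord_recr big_ord0 /= !mxE /= add0r. Qed.

Lemma evDl f g x : ev (f + g) x = ev f x + ev g x.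
Proof. by rewrite /ev -big_split; apply: eq_bigr => i _; rewrite mxE mulrDl. Qed.

Lemma evNl f x : ev (- f) x = - ev f x.
Proof. by rewrite /ev -sumrN; apply: eq_bigr => i _; rewrite mxE mulNr. Qed.

Lemma ev0l x : ev 0 x = 0.
Proof. by rewrite /ev big1 // => i _; rewrite mxE mul0r. Qed.

Lemma evDr f x y : ev f (x + y) = ev f x + ev f y.
Proof. by rewrite /ev -big_split; apply: eq_bigr => i _; rewrite mxE mulrDr. Qed.

Lemma evZr f a x : ev f (a *: x) = a * ev f x.
Proof. by rewrite /ev mulr_sumr; apply: eq_bigr => i _; rewrite mxE mulrCA. Qed.

Lemma ev_suml (I : finType) (F : I -> vec3 R) x :
  ev (\sum_i F i) x = \sum_i ev (F i) x.
Proof. by elim/big_rec2: _ => [|i _ g _ <-]; rewrite ?ev0l ?evDl. Qed.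

Lemma ev_sumr (I : finType) f (F : I -> vec3 R) :
  ev f (\sum_i F i) = \sum_i ev f (F i).
Proof.
elim/big_rec2: _ => [|i _ y _ <-]; last by rewrite evDr.
by rewrite /ev big1 // => i _; rewrite mxE mulr0.
Qed.

End LinearFunctionals.

Lemma ler_cos (R : realType) (x y : R) :
  0 <= x -> x <= y -> y <= pi -> cos y <= cos x.
Proof.
move=> x0 xy ypi; have [-> // | neq_xy] := eqVneq x y.
by apply: ltW; rewrite ltr_cos ?in_itv /= ?lt_neqAle ?neq_xy ?xy //; lra.
Qed.

Lemma cos_odd_mul_le (R : realType) (n m : nat) : (0 < n)%N -> odd m ->
  cos (m%:R * pi / n%:R) <= cos (pi / n%:R) :> R.
Proof.
move=> n_gt0; have nR : 0 < n%:R :> R by rewrite ltr0n.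
elim/ltn_ind: m => m IH odd_m.
have [le_mn | lt_nm] := leqP m n.
  have m1 : 1 <= m%:R :> R by rewrite ler1n; case: m odd_m {IH le_mn}.
  have mn : m%:R <= n%:R :> R by rewrite ler_nat.
  have xn : pi / n%:R * n%:R = pi :> R by rewrite divfK ?gt_eqF.
  have x0 : 0 < pi / n%:R :> R by rewrite divr_gt0 ?pi_gt0.
  rewrite -mulrA; apply: ler_cos; nra.
have [le_m2n | lt_2nm] := leqP m n.*2.
  have -> : m%:R * pi / n%:R = - ((n.*2 - m)%N%:R * pi / n%:R) + pi *+ 2 :> R.
    by rewrite natrB // -muln2 natrM; field; rewrite gt_eqF.
  rewrite cosD2pi cosN IH //; first by rewrite -addnn; lia.
  by rewrite oddB // odd_double odd_m.
have -> : m%:R * pi / n%:R = (m - n.*2)%N%:R * pi / n%:R + pi *+ 2 :> R.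
  by rewrite natrB 1?ltnW // -muln2 natrM; field; rewrite gt_eqF.
rewrite cosD2pi IH //; first by rewrite -addnn; lia.
by rewrite oddB 1?ltnW // odd_double odd_m.
Qed.

Lemma PbarE (R : realType) (n : nat) (M1 M2 : bool -> vec3 R) :
  Pbar n M1 M2 = 8^-1 * (fnorm n (M1 true + M2 true) + fnorm n (M1 true + M2 false)
                         + fnorm n (M1 false + M2 true) + fnorm n (M1 false + M2 false)).
Proof. by rewrite /Pbar !big_bool /= addrA. Qed.

Section Polygon.
Variables (R : realType) (n : nat).
Hypothesis n_gt2 : (2 < n)%N.

Local Notation cn := (cos (pi / n%:R) : R).

Let n_gt0 : (0 < n)%N. Proof. exact: ltn_trans n_gt2. Qed.
Let n_neq0 : n%:R != 0 :> R. Proof. by rewrite pnatr_eq0 -lt0n n_gt0. Qed.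
Let n_ge3 : 3 <= n%:R :> R. Proof. by rewrite ler_nat. Qed.
Let pi_divn_gt0 : 0 < pi / n%:R :> R. Proof. by rewrite divr_gt0 ?pi_gt0 ?ltr0n. Qed.
Let pi_divnK : pi / n%:R * n%:R = pi :> R. Proof. by rewrite divfK. Qed.

Lemma cos_pi_divn_gt0 : 0 < cn.
Proof.
apply: cos_gt0_pihalf.
by have := n_ge3; have := pi_divn_gt0; have := pi_divnK; have := @pi_gt0 R; nra.
Qed.

Lemma cos_pi_divn_ge_half : 1 <= 2 * cn.
Proof.
(* cos x >= cos (pi - 2 x) = 1 - 2 cos(x)^2 since x = pi/n <= pi/3 *)
have : cos (pi - (pi / n%:R) *+ 2) <= cn.
  by apply: ler_cos; have := n_ge3; have := pi_divn_gt0; have := pi_divnK; nra.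
rewrite addrC cosDpi cosN cos_mulr2n; have := cos_pi_divn_gt0; nra.
Qed.

Lemma cos_pi_divn_lt1 : cn < 1.
Proof.
rewrite -[X in _ < X]cos0 ltr_cos ?in_itv /= ?lexx ?pi_ge0 ?ltW //.
by have := n_ge3; have := pi_divn_gt0; have := pi_divnK; nra.
Qed.

Lemma rn_gt0 : 0 < rn R n.
Proof. by rewrite sqrtr_gt0 divr_gt0 ?cos_pi_divn_gt0. Qed.

Definition vertex_angle (k : nat) : R := 2 * k%:R * pi / n%:R.

Definition polygon_point (t : R) : vec3 R :=
  mk3 (rn R n * cos t) (rn R n * sin t) 1.

Lemma vertexE (j : 'I_n) : vertex R j = polygon_point (vertex_angle j.+1).
Proof. by []. Qed.

Lemma vertex_state (j : 'I_n) : state_space n (vertex R j).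
Proof.
exists (fun k => (k == j)%:R); split=> [k | ]; first exact: ler0n.
split; first by rewrite (bigD1 j) //= eqxx big1 ?addr0 // => k /negbTE->.
rewrite (bigD1 j) //= eqxx scale1r big1 ?addr0 // => k /negbTE->.
by rewrite scale0r.
Qed.

Lemma polygon_point_periodic (t : R) (q : nat) :
  polygon_point (t + pi *+ 2 *+ q) = polygon_point t.
Proof. by rewrite /polygon_point (periodicn (@cosD2pi R)) (periodicn (@sinD2pi R)). Qed.

Lemma polygon_point_state (k : nat) : state_space n (polygon_point (vertex_angle k)).
Proof.
(* [vertex j] has angle index [j.+1], hence the shift of [k] by [n.-1]. *)
pose m := (k + n.-1)%N; have lt_j : (m %% n < n)%N by rewrite ltn_pmod.
have kE : k%:R = (m %% n).+1%:R + (m %/ n)%:R * n%:R - n%:R :> R.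
  by rewrite -natrM -natrD addSn addnC -divn_eq -addnS prednK // natrD addrK.
rewrite -(polygon_point_periodic _ 1).
have -> : vertex_angle k + pi *+ 2 *+ 1 =
          vertex_angle (Ordinal lt_j).+1 + pi *+ 2 *+ (m %/ n).
  by rewrite /vertex_angle kE -mulr_natr -[pi *+ 2 *+ _]mulr_natr; field.
by rewrite polygon_point_periodic; apply: vertex_state.
Qed.

Lemma ev_state_bounded (f s : vec3 R) (lo hi : R) : state_space n s ->
  (forall j : 'I_n, lo <= ev f (vertex R j) <= hi) -> lo <= ev f s <= hi.
Proof.
move=> [w [w_ge0 [w_sum ->]]] f_bnd.
rewrite ev_sumr (eq_bigr _ (fun j _ => evZr _ _ _)).
rewrite -[lo]mul1r -[hi]mul1r -w_sum !mulr_suml.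
apply/andP; split; apply: ler_sum => j _;
  by have /andP[] := f_bnd j; have := w_ge0 j; nra.
Qed.

Lemma effect_of_vertices (e : vec3 R) :
  (forall j : 'I_n, 0 <= ev e (vertex R j) <= 1) -> effect n e.
Proof. by move=> e_bnd s /ev_state_bounded; apply. Qed.

Lemma ev_unit_state s : state_space n s -> ev (unit_eff R) s = 1.
Proof.
move=> s_state; apply/eqP; rewrite eq_le andbC.
apply: ev_state_bounded s_state _ => j.
by rewrite ev_mk3 !mul0r mul1r !add0r lexx.
Qed.

Lemma fnorm_ge (f s : vec3 R) : state_space n s -> `|ev f s| <= fnorm n f.
Proof.
move=> s_state; apply: ub_le_sup; last by exists s.
exists (\sum_(j < n) `|ev f (vertex R j)|) => _ [t t_state <-].
have vertex_bnd (j : 'I_n) : `|ev f (vertex R j)| <= \sum_(k < n) `|ev f (vertex R k)|.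
  by rewrite (bigD1 j) //= lerDl sumr_ge0.
by rewrite ler_norml; apply: ev_state_bounded t_state _ => j; rewrite -ler_norml.
Qed.

Lemma fnorm_le (f : vec3 R) (b : R) :
  (forall s, state_space n s -> `|ev f s| <= b) -> fnorm n f <= b.
Proof.
move=> f_bnd; apply: ge_sup; last by move=> _ [s s_state <-]; apply: f_bnd.
pose v := vertex R (Ordinal n_gt0).
by exists `|ev f v|, v; first exact: vertex_state.
Qed.

Definition row_marginal (J : bool -> bool -> vec3 R) (x : bool) : vec3 R := \sum_y J x y.
Definition col_marginal (J : bool -> bool -> vec3 R) (y : bool) : vec3 R := \sum_x J x y.

Lemma effect_of_complement (e e' : vec3 R) :
  (forall s, state_space n s -> 0 <= ev e s) ->
  (forall s, state_space n s -> 0 <= ev e' s) ->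
  e + e' = unit_eff R -> effect n e.
Proof.
move=> e_ge0 e'_ge0 ee' s s_state.
have := ev_unit_state _ s_state; rewrite -ee' evDl.
by have := e_ge0 _ s_state; have := e'_ge0 _ s_state; lra.
Qed.

Lemma marginals_compatible {J : bool -> bool -> vec3 R} :
  (forall x y, effect n (J x y)) -> \sum_x \sum_y J x y = unit_eff R ->
  [/\ dichotomic n (row_marginal J), dichotomic n (col_marginal J)
    & compatible n (row_marginal J) (col_marginal J)].
Proof.
move=> J_eff J_unit.
have J_ge0 x y s : state_space n s -> 0 <= ev (J x y) s.
  by move=> /(J_eff x y) /andP[].
have marginal_effect (M : bool -> vec3 R) :
    (forall b s, state_space n s -> 0 <= ev (M b) s) ->
    M true + M false = unit_eff R -> dichotomic n M.
  move=> M_ge0 M_unit; split=> // b.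
  by apply: (effect_of_complement _ _ (M_ge0 b) (M_ge0 (~~ b))); case: b; rewrite // addrC.
split; last by exists J.
- apply: marginal_effect; last by rewrite -J_unit big_bool.
  by move=> x s s_state; rewrite ev_suml sumr_ge0 // => y _; apply: J_ge0.
- apply: marginal_effect; last by rewrite -J_unit exchange_big big_bool.
  by move=> y s s_state; rewrite ev_suml sumr_ge0 // => x _; apply: J_ge0.
Qed.

Lemma ev_marginal_sum {J : bool -> bool -> vec3 R} {M1 M2 : bool -> vec3 R}
    {s : vec3 R} (x y : bool) :
  (forall x, \sum_y J x y = M1 x) -> (forall y, \sum_x J x y = M2 y) ->
  M1 true + M1 false = unit_eff R -> state_space n s ->
  ev (M1 x + M2 y) s = 1 + ev (J x y) s - ev (J (~~ x) (~~ y)) s.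
Proof.
move=> M1E M2E M1_unit s_state; rewrite evDl -M1E -M2E.
have := ev_unit_state _ s_state; rewrite -M1_unit evDl -!M1E !ev_suml !big_bool /=.
by case: x; case: y => /=; lra.
Qed.

Lemma fnorm_marginal_sum_ge {J : bool -> bool -> vec3 R} {M1 M2 : bool -> vec3 R}
    {s : vec3 R} (x y : bool) :
  (forall x, \sum_y J x y = M1 x) -> (forall y, \sum_x J x y = M2 y) ->
  M1 true + M1 false = unit_eff R -> state_space n s ->
  1 + ev (J x y) s - ev (J (~~ x) (~~ y)) s <= fnorm n (M1 x + M2 y).
Proof.
move=> M1E M2E M1_unit s_state; rewrite -(ev_marginal_sum x y M1E M2E M1_unit s_state).
exact: le_trans (ler_norm _) (fnorm_ge _ _ s_state).
Qed.

Definition apex : vec3 R := mk3 0 0 (1 + 1 / cn).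

Lemma ev_unit_apex : ev (unit_eff R) apex = 1 + 1 / cn.
Proof. by rewrite ev_mk3 !mul0r !add0r mul1r. Qed.

Lemma polygon_point_opposite (t : R) :
  polygon_point t + (2 * cn)^-1 *:
    (polygon_point (t + pi - pi / n%:R) + polygon_point (t + pi + pi / n%:R)) = apex.
Proof.
have cn_neq0 : cn != 0 by rewrite gt_eqF ?cos_pi_divn_gt0.
apply/rowP => i; rewrite /polygon_point /apex /mk3 !mxE ![t + pi + _]addrAC.
rewrite !cosDpi !sinDpi cosB cosD sinB sinD.
by case: i => [[|[|[|i]]] hi] //=; field.
Qed.

Definition phase_functional (k phi d : R) : vec3 R :=
  mk3 (k * cos phi / rn R n) (k * sin phi / rn R n) d.

Lemma ev_phase_functional (k phi d t : R) :
  ev (phase_functional k phi d) (polygon_point t) = k * cos (t - phi) + d.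
Proof.
have rn_neq0 : rn R n != 0 by rewrite gt_eqF ?rn_gt0.
by rewrite ev_mk3 cosB; field.
Qed.

Definition optimal_effect (phi : R) : vec3 R :=
  phase_functional (2 * cn * (1 + cn))^-1 phi ((2 * cn * (1 + cn))^-1 * cn).

Definition optimal_joint (x y : bool) : vec3 R :=
  match x, y with
  | true, true => optimal_effect 0
  | true, false => optimal_effect (pi / n%:R *+ 2)
  | false, true => 0
  | false, false => unit_eff R - (optimal_effect 0 + optimal_effect (pi / n%:R *+ 2))
  end.

Lemma ev_optimal_effect (phi t : R) :
  ev (optimal_effect phi) (polygon_point t) = (cos (t - phi) + cn) / (2 * cn * (1 + cn)).
Proof. by rewrite ev_phase_functional -mulrDr mulrC. Qed.

Lemma ev_optimal_joint_ff (t : R) :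
  ev (optimal_joint false false) (polygon_point t) = (cn - cos (t - pi / n%:R)) / (1 + cn).
Proof.
have cn_gt0 := cos_pi_divn_gt0.
have cn_neq0 : cn != 0 by rewrite gt_eqF.
have cn1_neq0 : 1 + cn != 0 by rewrite gt_eqF ?addr_gt0.
have cos_sum : cos t + cos (t - pi / n%:R *+ 2) = 2 * cn * cos (t - pi / n%:R).
  set x := pi / n%:R; rewrite -[in cos t](subrK x t) mulr2n opprD addrA.
  by rewrite (cosD (t - x) x) (cosB (t - x) x); ring.
rewrite /= evDl evNl evDl !ev_optimal_effect subr0 -mulrDl addrACA cos_sum.
rewrite /unit_eff /polygon_point ev_mk3.
by field; rewrite cn_neq0 cn1_neq0.
Qed.

Lemma optimal_joint_sum : \sum_x \sum_y optimal_joint x y = unit_eff R.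
Proof. by rewrite !big_bool /= add0r addrC subrK. Qed.

Section OddPolygon.
Hypothesis n_odd : odd n.

Let n_half : n%:R = 2 * n./2%:R + 1 :> R.
Proof. by rewrite -[in LHS](odd_double_half n) n_odd -muln2 natrD natrM addrC mulrC. Qed.

Lemma vertex_angleD (k l : nat) : vertex_angle (k + l) = vertex_angle k + vertex_angle l.
Proof. by rewrite /vertex_angle natrD; field. Qed.

Lemma vertex_angle_half : vertex_angle n./2 = pi - pi / n%:R.
Proof. by rewrite /vertex_angle n_half; field; rewrite -n_half. Qed.

Lemma vertex_angle_halfS : vertex_angle n./2.+1 = pi + pi / n%:R.
Proof. by rewrite /vertex_angle -natr1 n_half; field; rewrite -n_half. Qed.

Lemma cos_vertex_angle_ge (k : nat) : - cn <= cos (vertex_angle k).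
Proof.
rewrite lerNl -cosDpi.
have -> : vertex_angle k + pi = (k.*2 + n)%N%:R * pi / n%:R.
  by rewrite /vertex_angle natrD -muln2 natrM; field.
by apply: cos_odd_mul_le; rewrite // oddD odd_double n_odd.
Qed.

Lemma ev_le_apex {e s : vec3 R} : effect n e -> state_space n s -> ev e s <= ev e apex.
Proof.
move=> e_eff s_state; have /andP[_ ->] // : 0 <= ev e s <= ev e apex.
apply: ev_state_bounded s_state _ => j; rewrite (andP (e_eff _ (vertex_state j))).1 /=.
have opp_ge0 (k : nat) : 0 <= ev e (polygon_point (vertex_angle (j.+1 + k))).
  by have /andP[] := e_eff _ (polygon_point_state (j.+1 + k)).
rewrite vertexE -(polygon_point_opposite (vertex_angle j.+1)) evDr evZr evDr.
have := opp_ge0 n./2; have := opp_ge0 n./2.+1.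
rewrite !vertex_angleD vertex_angle_half vertex_angle_halfS !addrA => ge0_a ge0_b.
by rewrite lerDl mulr_ge0 ?addr_ge0 // invr_ge0 mulr_ge0 // ltW ?cos_pi_divn_gt0.
Qed.

Lemma fnorm_marginal_sum_le {J : bool -> bool -> vec3 R} {M1 M2 : bool -> vec3 R}
    (x y : bool) :
  (forall x y, effect n (J x y)) ->
  (forall x, \sum_y J x y = M1 x) -> (forall y, \sum_x J x y = M2 y) ->
  M1 true + M1 false = unit_eff R ->
  fnorm n (M1 x + M2 y) <= 1 + ev (J x y) apex.
Proof.
move=> J_eff M1E M2E M1_unit; apply: fnorm_le => s s_state.
rewrite (ev_marginal_sum x y M1E M2E M1_unit s_state) ler_norml.
have := ev_le_apex (J_eff x y) s_state.
have /andP[Jxy_ge0 _] := J_eff x y s s_state.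
have /andP[Jxy'_ge0 Jxy'_le1] := J_eff (~~ x) (~~ y) s s_state.
by lra.
Qed.

Lemma Pbar_le (M1 M2 : bool -> vec3 R) :
  dichotomic n M1 -> compatible n M1 M2 -> Pbar n M1 M2 <= 8^-1 * (5 + 1 / cn).
Proof.
move=> [_ M1_unit] [J [J_eff [M1E M2E]]].
have J_apex : ev (J true true) apex + ev (J true false) apex
              + ev (J false true) apex + ev (J false false) apex = 1 + 1 / cn.
  by rewrite -ev_unit_apex -M1_unit evDl -!M1E !ev_suml !big_bool /= addrA.
rewrite PbarE ler_pM2l ?invr_gt0 ?ltr0n //.
have := fnorm_marginal_sum_le true true J_eff M1E M2E M1_unit.
have := fnorm_marginal_sum_le true false J_eff M1E M2E M1_unit.
have := fnorm_marginal_sum_le false true J_eff M1E M2E M1_unit.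
have := fnorm_marginal_sum_le false false J_eff M1E M2E M1_unit.
by lra.
Qed.

Lemma optimal_effect_vertex_bounds (m : nat) :
  0 <= (cos (vertex_angle m) + cn) / (2 * cn * (1 + cn)) <= 1.
Proof.
have cn_gt0 := cos_pi_divn_gt0; have cn_half := cos_pi_divn_ge_half.
have cos_ge := cos_vertex_angle_ge m; have cos_le := cos_le1 (vertex_angle m).
have D_gt0 : 0 < 2 * cn * (1 + cn) by rewrite !mulr_gt0 ?addr_gt0.
by rewrite divr_ge0 ?ler_pdivrMr //=; [nra | lra | lra].
Qed.

Lemma optimal_joint_effect (x y : bool) : effect n (optimal_joint x y).
Proof.
have cn_gt0 := cos_pi_divn_gt0.
apply: effect_of_vertices => j; rewrite vertexE.
case: x; case: y => /=.
- by rewrite ev_optimal_effect subr0 optimal_effect_vertex_bounds.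
- rewrite ev_optimal_effect.
  have -> : vertex_angle j.+1 - pi / n%:R *+ 2 = vertex_angle j.
    by rewrite /vertex_angle -natr1 mulr2n; field.
  exact: optimal_effect_vertex_bounds.
- by rewrite ev0l lexx ler01.
- rewrite ev_optimal_joint_ff.
  have -> : vertex_angle j.+1 - pi / n%:R = j.*2.+1%:R * pi / n%:R.
    by rewrite /vertex_angle -natr1 -[in RHS]natr1 -muln2 natrM; field.
  have := @cos_odd_mul_le R n j.*2.+1 n_gt0; rewrite /= odd_double => /(_ isT) cos_le.
  have cos_ge := @cos_geN1 R (j.*2.+1%:R * pi / n%:R).
  by rewrite divr_ge0 ?ler_pdivrMr ?addr_gt0 //=; lra.
Qed.

Lemma Pbar_optimal_ge :
  8^-1 * (5 + 1 / cn) <= Pbar n (row_marginal optimal_joint) (col_marginal optimal_joint).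
Proof.
have [[_ M1_unit] _ _] := marginals_compatible optimal_joint_effect optimal_joint_sum.
have bound x y k := @fnorm_marginal_sum_ge optimal_joint _ _ _ x y
  (fun _ => erefl) (fun _ => erefl) M1_unit (polygon_point_state k).
have cn_gt0 := cos_pi_divn_gt0.
have D_half : (1 + cn) / (2 * cn * (1 + cn)) = (1 / cn) / 2.
  by field; rewrite !gt_eqF ?addr_gt0.
have va0 : vertex_angle 0 = 0 by rewrite /vertex_angle mulr0 !mul0r.
have va1 : vertex_angle 1 = pi / n%:R *+ 2 by rewrite /vertex_angle mulr2n; field.
have ff_one : (cn - -1) / (1 + cn) = 1 by rewrite opprK addrC divff ?gt_eqF ?addr_gt0.
move: (bound true true 0%N) (bound true false 1%N).
move: (bound false true n./2.+1) (bound false false n./2.+1).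
rewrite va0 va1 vertex_angle_halfS !ev_optimal_effect !ev0l !ev_optimal_joint_ff.
rewrite !subrr !subr0 sub0r addrK cos0 cosN cospi ff_one D_half.
have -> : pi + pi / n%:R - pi / n%:R *+ 2 = - (pi / n%:R) + pi :> R by rewrite mulr2n; ring.
rewrite [pi + _]addrC !cosDpi cosN.
rewrite PbarE ler_pM2l ?invr_gt0 ?ltr0n //.
by lra.
Qed.

End OddPolygon.
End Polygon.

Theorem mainTheorem13 (R : realType) (n : nat) (hn5 : (5 <= n)%N) (hodd : odd n) :
  let v : R := 2^-1 * (1 + (1 + 1 / cos (pi / n%:R)) / 4) in
  ((forall M1 M2 : bool -> vec3 R,
      dichotomic n M1 -> dichotomic n M2 -> compatible n M1 M2 ->
      Pbar n M1 M2 <= v) /\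
   (exists M1 M2 : bool -> vec3 R,
      [/\ dichotomic n M1, dichotomic n M2, compatible n M1 M2 & Pbar n M1 M2 = v])) /\
  3 / 4 < v /\
  (exists M1 M2 : bool -> vec3 R,
      [/\ dichotomic n M1, dichotomic n M2, compatible n M1 M2 & 3 / 4 < Pbar n M1 M2]).
Proof.
move=> v; have n_gt2 : (2 < n)%N by apply: leq_trans hn5.
have vE : v = 8^-1 * (5 + 1 / cos (pi / n%:R)) by rewrite /v; lra.
pose M1 := row_marginal R (optimal_joint R n); pose M2 := col_marginal R (optimal_joint R n).
have [M1_dich M2_dich M12_comp] :=
  marginals_compatible R n (optimal_joint_effect R n n_gt2 hodd) (optimal_joint_sum R n).
have Pbar_optimal : Pbar n M1 M2 = v.
  by rewrite vE; apply/le_anti; rewrite Pbar_le ?Pbar_optimal_ge.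
have v_gt : 3 / 4 < v.
  have c_gt0 := cos_pi_divn_gt0 R n n_gt2; have c_lt1 := cos_pi_divn_lt1 R n n_gt2.
  have : 1 < 1 / cos (pi / n%:R) :> R by rewrite ltr_pdivlMr // mul1r.
  by rewrite vE; lra.
split; [split | split] => //.
- by move=> M1' M2' M1'_dich _ M12'_comp; rewrite vE Pbar_le.
- by exists M1, M2.
- by exists M1, M2; rewrite Pbar_optimal.
Qed.
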